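(* Let $\kappa>-1$, $B=\operatorname{diag}(b_1,\dots,b_n)$, and consider on $T^*V(n,r)$ the flow $$\dot X=P-(1+2\kappa)XP^TX,\qquad \dot P=(1+2\kappa)PX^TP-B^2X+2BXX^TBX+X\Lambda,$$ with $\Lambda=X^TBX-2X^TBXX^TBX-P^TP$. Then along this flow the momentum mapping $\Phi=PX^T-XP^T$ satisfies $$\frac{d}{dt}\Phi=\tfrac12\left[B,(\mathbf I_n-2XX^T)B(\mathbf I_n-2XX^T)\right].$$ Moreover, on the invariant subvariety $\{(X,P):X^TP=P^TX=0\}$ one has $$\frac{d}{dt}\Big((\mathbf I_n-2XX^T)B(\mathbf I_n-2XX^T)\Big)=2\left[\Phi,(\mathbf I_n-2XX^T)B(\mathbf I_n-2XX^T)\right].$$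
   Context: $V(n,r)=\{X\in M_{n,r}(\mathbb R):X^TX=\mathbf I_r\}$, and $T^*V(n,r)$ is realized as the set of pairs $(X,P)$ of real $n\times r$ matrices with $X^TX=\mathbf I_r$, $X^TP+P^TX=0$. The flow is the Hamiltonian flow of $H=\frac12\operatorname{tr}(P^TP)-(\frac12+\kappa)\operatorname{tr}((X^TP)^2)+\frac12\operatorname{tr}(X^TB^2X)-\frac12\operatorname{tr}(X^TBXX^TBX)$ with respect to the canonical symplectic structure restricted from $\mathbb R^{2nr}$. $[\cdot,\cdot]$ is the matrix commutator. *)

From HB Require Import structures.
From mathcomp Require Import all_boot all_order all_algebra.
From mathcomp Require Import all_classical all_reals all_analysis.
Set Implicit Arguments. Unset Strict Implicit. Unset Printing Implicit Defensive.
Import Order.TTheory GRing.Theory Num.Theory.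
Local Open Scope ring_scope.

Definition mxcomm (R : pzRingType) (n : nat) (A B : 'M[R]_n) : 'M[R]_n :=
  A *m B - B *m A.

Definition mx_deriv_at (R : realType) (m n : nat)
    (F : R -> 'M[R]_(m, n)) (D : 'M[R]_(m, n)) (t : R) : Prop :=
  forall (i : 'I_m) (j : 'I_n), is_derive t (1 : R) (fun s => F s i j) (D i j).

Section Flow.
Variables (R : realType) (n r : nat).
Implicit Types (X P : 'M[R]_(n, r)) (b : 'rV[R]_n).

Definition Bmat b : 'M[R]_n := diag_mx b.

Definition Phi X P : 'M[R]_n := P *m X^T - X *m P^T.

Definition Lmat b X : 'M[R]_n :=
  (1%:M - 2 *: (X *m X^T)) *m Bmat b *m (1%:M - 2 *: (X *m X^T)).

Definition Lambda b X P : 'M[R]_r :=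
  X^T *m Bmat b *m X - 2 *: (X^T *m Bmat b *m X *m X^T *m Bmat b *m X)
  - P^T *m P.

Definition Xdot (kappa : R) X P : 'M[R]_(n, r) :=
  P - (1 + 2 * kappa) *: (X *m P^T *m X).

Definition Pdot (kappa : R) b X P : 'M[R]_(n, r) :=
  (1 + 2 * kappa) *: (P *m X^T *m P) - Bmat b *m Bmat b *m X
  + 2 *: (Bmat b *m X *m X^T *m Bmat b *m X) + X *m Lambda b X P.

End Flow.

From HB Require Import structures.
From mathcomp Require Import all_boot all_order all_algebra.
From mathcomp Require Import all_classical all_reals all_analysis.
From mathcomp Require Import ring.
Set Implicit Arguments. Unset Strict Implicit.
Import Order.TTheory GRing.Theory Num.Theory.
Local Open Scope ring_scope.

(* Differentiating [Phi = P X^T - X P^T] along the flow gives an expression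
   in which the kappa-terms and the symmetric multiplier [X Lambda X^T] cancel
   as words in the free algebra; all that survives is
   [S B^2 - B^2 S + 2 B S B S - 2 S B S B] with [S = X X^T], which is the
   expansion of [1/2 [B, (1 - 2S) B (1 - 2S)]].  No constraint is needed.
   On the subvariety [X^T P = P^T X = 0] the flow reduces to [X' = P], so the
   reflection [R = 1 - 2 X X^T] has derivative [-2 (P X^T + X P^T)]; using
   [X^T X = 1] this equals both [2 Phi R] and [-2 R Phi], and the Leibniz rule
   applied to [L = R B R] gives [L' = 2 [Phi, L]]. *)

Section MatrixDerivative.
Variables (R : realType) (t : R).

Lemma mx_deriv_atD m n (F G : R -> 'M[R]_(m, n)) D E :
  mx_deriv_at F D t -> mx_deriv_at G E t ->
  mx_deriv_at (fun s => F s + G s) (D + E) t.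
Proof.
move=> dF dG i j; rewrite mxE.
have -> : (fun s => (F s + G s) i j) = (fun s => F s i j) + (fun s => G s i j).
  by apply/funext => s /=; rewrite mxE.
exact: is_deriveD.
Qed.

Lemma mx_deriv_atZ m n (k : R) (F : R -> 'M[R]_(m, n)) D :
  mx_deriv_at F D t -> mx_deriv_at (fun s => k *: F s) (k *: D) t.
Proof.
move=> dF i j; rewrite mxE.
have -> : (fun s => (k *: F s) i j) = k \*: (fun s => F s i j).
  by apply/funext => s /=; rewrite mxE.
exact: is_deriveZ.
Qed.

Lemma mx_deriv_atB m n (F G : R -> 'M[R]_(m, n)) D E :
  mx_deriv_at F D t -> mx_deriv_at G E t ->
  mx_deriv_at (fun s => F s - G s) (D - E) t.
Proof.
move=> dF dG; rewrite -scaleN1r.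
have -> : (fun s => F s - G s) = (fun s => F s + (-1) *: G s).
  by apply/funext => s; rewrite scaleN1r.
by apply: mx_deriv_atD => //; apply: mx_deriv_atZ.
Qed.

Lemma mx_deriv_at_cst m n (A : 'M[R]_(m, n)) : mx_deriv_at (fun _ => A) 0 t.
Proof. by move=> i j; rewrite mxE; apply: is_derive_cst. Qed.

Lemma mx_deriv_at_tr m n (F : R -> 'M[R]_(m, n)) D :
  mx_deriv_at F D t -> mx_deriv_at (fun s => (F s)^T) D^T t.
Proof.
move=> dF i j; rewrite mxE.
have -> : (fun s => (F s)^T i j) = (fun s => F s j i).
  by apply/funext => s /=; rewrite mxE.
exact: dF.
Qed.

Lemma mx_deriv_atM m n p (F : R -> 'M[R]_(m, n)) (G : R -> 'M[R]_(n, p)) D E :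
  mx_deriv_at F D t -> mx_deriv_at G E t ->
  mx_deriv_at (fun s => F s *m G s) (D *m G t + F t *m E) t.
Proof.
move=> dF dG i j.
have dFG k : is_derive t 1 (fun s => F s i k * G s k j)
                       (D i k * G t k j + F t i k * E k j).
  have -> : D i k * G t k j + F t i k * E k j
            = F t i k *: E k j + G t k j *: D i k.
    by rewrite addrC [D i k * _]mulrC.
  exact: is_deriveM.
have -> : (fun s => (F s *m G s) i j)
          = \sum_(k < n) (fun s => F s i k * G s k j).
  by apply/funext => s; rewrite fct_sumE mxE.
by rewrite !mxE -big_split; apply: is_derive_sum.
Qed.

End MatrixDerivative.

Section MatrixRules.
Variables (R : pzRingType) (m n : nat) (i : 'I_m) (j : 'I_n).
Implicit Types A B : 'M[R]_(m, n).

Lemma mxDE A B : (A + B) i j = A i j + B i j. Proof. by rewrite mxE. Qed.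
Lemma mxNE A : (- A) i j = - A i j. Proof. by rewrite mxE. Qed.
Lemma mxZE k A : (k *: A) i j = k * A i j. Proof. by rewrite mxE. Qed.

Lemma trmxD A B : (A + B)^T = A^T + B^T. Proof. exact: linearD. Qed.
Lemma trmxN A : (- A)^T = - A^T. Proof. exact: linearN. Qed.
Lemma trmxZ k A : (k *: A)^T = k *: A^T. Proof. exact: linearZ. Qed.

End MatrixRules.

Section FlowAlgebra.
Variables (R : realType) (n r : nat).
Implicit Types (X P : 'M[R]_(n, r)) (b : 'rV[R]_n).

Definition reflmx X : 'M[R]_n := 1%:M - 2 *: (X *m X^T).

Lemma Phi_flow_deriv_eq kappa b X P :
  Pdot kappa b X P *m X^T + P *m (Xdot kappa X P)^T
    - (Xdot kappa X P *m P^T + X *m (Pdot kappa b X P)^T)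
  = 2^-1 *: mxcomm (Bmat b) (Lmat b X).
Proof.
rewrite /Xdot /Pdot /Lambda /Lmat /mxcomm /Bmat.
rewrite !(trmxD, trmxN, trmxZ, trmx_mul, trmxK, tr_diag_mx).
rewrite !(mulmxDl, mulmxDr, mulmxBl, mulmxBr, mulmxN, mulNmx, mul1mx, mulmx1).
rewrite -!(scalemxAl, scalemxAr) !mulmxA.
(* Entries of products stay atomic: the identity holds word by word. *)
by apply/matrixP => i j; rewrite !(mxDE, mxNE, mxZE); field.
Qed.

Lemma Xdot_subvariety kappa X P : P^T *m X = 0 -> Xdot kappa X P = P.
Proof. by move=> PX0; rewrite /Xdot -mulmxA PX0 mulmx0 scaler0 subr0. Qed.

Section Subvariety.
Variables (X P : 'M[R]_(n, r)).
Hypotheses (XX1 : X^T *m X = 1%:M) (XP0 : X^T *m P = 0) (PX0 : P^T *m X = 0).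

Lemma Phi_mul_reflmx : Phi X P *m reflmx X = - (P *m X^T + X *m P^T).
Proof.
rewrite /Phi /reflmx mulmxBr mulmx1 -scalemxAr mulmxBl !mulmxA.
rewrite -[P *m X^T *m X]mulmxA -[X *m P^T *m X]mulmxA XX1 PX0.
rewrite mulmx1 mulmx0 mul0mx.
by apply/matrixP => i j; rewrite !mxE; ring.
Qed.

Lemma reflmx_mul_Phi : reflmx X *m Phi X P = P *m X^T + X *m P^T.
Proof.
rewrite /Phi /reflmx mulmxBl mul1mx -scalemxAl !mulmxBr !mulmxA.
rewrite -[X *m X^T *m P]mulmxA -[X *m X^T *m X]mulmxA XX1 XP0.
rewrite mulmx1 mulmx0 mul0mx.
by apply/matrixP => i j; rewrite !mxE; ring.
Qed.

Lemma Lmat_deriv_subvariety b :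
  - (2 *: (P *m X^T + X *m P^T)) *m Bmat b *m reflmx X
    + reflmx X *m Bmat b *m - (2 *: (P *m X^T + X *m P^T))
  = 2 *: mxcomm (Phi X P) (Lmat b X).
Proof.
have eL : - (2 *: (P *m X^T + X *m P^T)) = 2 *: (Phi X P *m reflmx X).
  by rewrite Phi_mul_reflmx scalerN.
have eR : - (2 *: (P *m X^T + X *m P^T)) = - (2 *: (reflmx X *m Phi X P)).
  by rewrite reflmx_mul_Phi.
rewrite {1}eL eR /mxcomm /Lmat -/(reflmx X).
by rewrite mulmxN -!scalemxAl -!scalemxAr !mulmxA scalerBr.
Qed.

End Subvariety.

Variable (t : R).

Lemma reflmx_deriv (X : R -> 'M[R]_(n, r)) (D : 'M[R]_(n, r)) :
  mx_deriv_at X D t ->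
  mx_deriv_at (fun s => reflmx (X s)) (- (2 *: (D *m (X t)^T + X t *m D^T))) t.
Proof.
move=> dX; rewrite -[E in mx_deriv_at _ E]sub0r.
apply/mx_deriv_atB/mx_deriv_atZ; first exact: mx_deriv_at_cst.
by apply: mx_deriv_atM => //; apply: mx_deriv_at_tr.
Qed.

Lemma Lmat_deriv b (X : R -> 'M[R]_(n, r)) (S' : 'M[R]_n) :
  mx_deriv_at (fun s => reflmx (X s)) S' t ->
  mx_deriv_at (fun s => Lmat b (X s))
    (S' *m Bmat b *m reflmx (X t) + reflmx (X t) *m Bmat b *m S') t.
Proof.
move=> dR; have := mx_deriv_atM (mx_deriv_atM dR (mx_deriv_at_cst t (Bmat b))) dR.
by rewrite mulmx0 addr0.
Qed.

End FlowAlgebra.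

Theorem lemma8 (R : realType) (n r : nat) (kappa : R) (b : 'rV[R]_n)
    (a c : R) (X P : R -> 'M[R]_(n, r)) :
  -1 < kappa ->
  (* the curve lies in T^*V(n,r) *)
  (forall t, a < t < c -> (X t)^T *m X t = 1%:M) ->
  (forall t, a < t < c -> (X t)^T *m P t + (P t)^T *m X t = 0) ->
  (* the curve is an integral curve of the flow *)
  (forall t, a < t < c -> mx_deriv_at X (Xdot kappa (X t) (P t)) t) ->
  (forall t, a < t < c -> mx_deriv_at P (Pdot kappa b (X t) (P t)) t) ->
  (forall t, a < t < c ->
     mx_deriv_at (fun s => Phi (X s) (P s))
       (2^-1 *: mxcomm (Bmat b) (Lmat b (X t))) t)
  /\
  ((forall t, a < t < c -> (X t)^T *m P t = 0 /\ (P t)^T *m X t = 0) ->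
   forall t, a < t < c ->
     mx_deriv_at (fun s => Lmat b (X s))
       (2 *: mxcomm (Phi (X t) (P t)) (Lmat b (X t))) t).
Proof.
move=> _ XX1 _ dX dP; split=> [t tI | onV t tI].
  have [dXt dPt] := (dX t tI, dP t tI).
  rewrite -(Phi_flow_deriv_eq kappa b (X t) (P t)).
  exact: mx_deriv_atB (mx_deriv_atM dPt (mx_deriv_at_tr dXt))
                      (mx_deriv_atM dXt (mx_deriv_at_tr dPt)).
have [XP0 PX0] := onV t tI.
have dXt := dX t tI; rewrite Xdot_subvariety // in dXt.
rewrite -(Lmat_deriv_subvariety (XX1 t tI) XP0 PX0 b).
exact/Lmat_deriv/reflmx_deriv.
Qed.
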